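(* Let $K$ be a non-Archimedean locally compact field of characteristic $p>0$ with group of 1-units $U=1+M_K$. Let $f:U\to U$ be a locally analytic group endomorphism with $f(1+x)=\sum_{n=0}^{\infty}a_nx^n$ for all $x\in M_K$, where $\sum a_nx^n\in 1+x\mathbb{F}_p[[x]]$. If $a_n=0$ for all but finitely many $n$, then $f(1+x)=(1+x)^N$ for some integer $N\ge0$.
   Context: $M_K$ is the maximal ideal of the ring of integers $R_K$ of $K$; with constant field $\mathbb{F}$ of order $q$ and uniformizer $\pi$, $K=\mathbb{F}((\pi))$, $U=1+\pi\mathbb{F}[[\pi]]$, and $|x|=q^{-v(x)}$. A continuous function $f$ on a ball $B_{\alpha,t}=\{u\in R_K:|u-\alpha|\le t\}$, $t=|\rho|$, is analytic there if $f(u)=\sum_{n\ge0}c_n\left(\frac{u-\alpha}{\rho}\right)^n$ with $c_n\in K$, $c_n\to0$; $f:U\to K$ is locally analytic if each $\alpha\in U$ has a ball $B_{\alpha,t_\alpha}\subset U$, $t_\alpha>0$, on which $f$ is analytic. *)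

From HB Require Import structures.
From mathcomp Require Import all_boot all_order all_algebra.
Set Implicit Arguments. Unset Strict Implicit. Unset Printing Implicit Defensive.
Import Order.TTheory GRing.Theory Num.Theory.
Local Open Scope ring_scope.

Section LocalField.
Variables (K : fieldType) (v : K -> int).

(* "v(x) >= m", with the convention v(0) = +oo *)
Definition vge (x : K) (m : int) : bool := (x == 0) || (m <= v x).

Definition RK (x : K) : bool := vge x 0.
Definition MK (x : K) : bool := vge x 1.
Definition UK (u : K) : bool := MK (u - 1).

Definition cvgK (s : nat -> K) (l : K) : Prop :=
  forall m : int, exists N : nat, forall n, (N <= n)%N -> vge (s n - l) m.
Definition cauchyK (s : nat -> K) : Prop :=
  forall m : int, exists N : nat, forall n k, (N <= n)%N -> (N <= k)%N ->
    vge (s n - s k) m.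

Definition seriesK (c : nat -> K) (l : K) : Prop :=
  cvgK (fun N => \sum_(n < N) c n) l.

(* K is a non-Archimedean locally compact field of characteristic p, i.e. a
   field complete for the discrete valuation v (normalized, with uniformizer
   pi) whose residue field R_K / M_K is finite, and of characteristic p. *)
Record is_local_field (p : nat) (pi : K) : Prop := {
  lf_vM : forall x y, x != 0 -> y != 0 -> v (x * y) = v x + v y;
  lf_vD : forall x y, x != 0 -> y != 0 -> x + y != 0 ->
            Num.min (v x) (v y) <= v (x + y);
  lf_pi0 : pi != 0;
  lf_vpi : v pi = 1;
  lf_char : p \in [pchar K];
  lf_residue_finite : exists s : seq K, all RK s /\
      forall x, RK x -> exists2 r, r \in s & MK (x - r);
  lf_complete : forall s, cauchyK s -> exists l, cvgK s l
}.

Definition ballK (alpha rho u : K) : bool := RK u && vge (u - alpha) (v rho).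

Definition locally_analytic (f : K -> K) : Prop :=
  forall alpha, UK alpha ->
    exists rho : K, rho != 0 /\
      (forall u, ballK alpha rho u -> UK u) /\
      exists c : nat -> K, cvgK c 0 /\
        forall u, ballK alpha rho u ->
          seriesK (fun n => c n * ((u - alpha) / rho) ^+ n) (f u).

Definition U_endo (f : K -> K) : Prop :=
  (forall u, UK u -> UK (f u)) /\
  (forall u w, UK u -> UK w -> f (u * w) = f u * f w).

End LocalField.

(** A finite power series is a polynomial, so [f] agrees on [U] with
    [g(u) = sum_n a_n (u - 1)^n], and [g <> 0] because [g(1) = f(1)] lies in
    [U], which avoids [0].  Since [U] is infinite, the relation
    [g(w u) = g(w) g(u)] for [u] in [U] is the polynomial identity
    [g \Po (w X) = g(w) g]; comparing leading coefficients gives [g(w) = w^N]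
    with [N = deg g]. *)

From mathcomp Require Import all_boot all_order all_algebra.
From mathcomp Require Import ring.
Import Order.TTheory GRing.Theory Num.Theory.
Local Open Scope ring_scope.
Set Implicit Arguments.

Section PolyMultiplicative.
Variables (R : idomainType) (P : pred R).
Hypothesis P_poly_determining :
  forall q : {poly R}, {in P, forall u, q.[u] = 0} -> q = 0.
Hypothesis P_neq0 : 0 \notin P.

Lemma multiplicative_poly_monomial (g : {poly R}) :
  g != 0 -> {in P &, forall u w, g.[u * w] = g.[u] * g.[w]} ->
  {in P, forall w, g.[w] = w ^+ (size g).-1}.
Proof.
move=> g_neq0 g_mul w Pw.
have w_neq0 : w != 0 by apply: contraNneq P_neq0 => <-.
have g_scaled : g \Po (w *: 'X) = g.[w] *: g.
  apply/eqP; rewrite -subr_eq0; apply/eqP/P_poly_determining => u Pu.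
  by rewrite hornerD hornerN hornerZ horner_comp hornerZ hornerX g_mul ?subrr.
have := congr1 lead_coef g_scaled.
rewrite lead_coefZ lead_coef_comp ?size_scale ?size_polyX //.
rewrite lead_coefZ lead_coefX mulr1 mulrC => /(mulIf _) -> //.
by rewrite lead_coef_eq0.
Qed.

End PolyMultiplicative.

Lemma poly_eq0_of_inj_roots (R : idomainType) (q : {poly R}) (s : nat -> R) :
  injective s -> (forall k, root q (s k)) -> q = 0.
Proof.
move=> s_inj q_s; apply/eqP; apply: contraT => q_neq0.
have roots_q : all (root q) (mkseq s (size q)) by apply/allP => _ /mapP[k _ ->].
have uniq_s : uniq (mkseq s (size q)) by rewrite map_inj_uniq ?iota_uniq.
by have := max_poly_roots q_neq0 roots_q uniq_s; rewrite size_mkseq ltnn.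
Qed.

Section Convergence.
Variables (K : fieldType) (v : K -> int).

Lemma vge_all_eq0 (x : K) : (forall m, vge v x m) -> x = 0.
Proof.
move=> x_small; apply/eqP; apply: contraT => x_neq0.
by have := x_small (v x + 1); rewrite /vge (negbTE x_neq0) /= gerDl.
Qed.

Lemma cvgK_eventually_const (s : nat -> K) (a l : K) (M : nat) :
  (forall n, (M <= n)%N -> s n = a) -> cvgK v s l -> l = a.
Proof.
move=> s_const s_l; apply/eqP; rewrite eq_sym -subr_eq0; apply/eqP.
apply: vge_all_eq0 => m; have [N s_lN] := s_l m.
by rewrite -(s_const (N + M)%N) ?leq_addl ?s_lN ?leq_addr.
Qed.

Lemma seriesK_finite_support (c : nat -> K) (l : K) (M : nat) :
  (forall n, (M <= n)%N -> c n = 0) -> seriesK v c l ->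
  l = \sum_(n < M) c n.
Proof.
move=> c_vanish c_l; apply: (@cvgK_eventually_const _ _ _ M _ c_l) => n le_Mn.
rewrite -(subnKC le_Mn) big_split_ord /= [X in _ + X]big1 ?addr0 // => i _.
by rewrite c_vanish ?leq_addr.
Qed.

End Convergence.

Section OneUnits.
Variables (p : nat) (K : fieldType) (v : K -> int) (pi : K).
Hypothesis HK : is_local_field v p pi.

Lemma valuation1 : v 1 = 0.
Proof.
have := lf_vM HK (oner_neq0 K) (oner_neq0 K).
by rewrite mulr1 -{1}[v 1]addr0 => /addrI/esym.
Qed.

Lemma valuationN1 : v (-1) = 0.
Proof.
have N1_neq0 : (-1 : K) != 0 by rewrite oppr_eq0 oner_neq0.
have := lf_vM HK N1_neq0 N1_neq0; rewrite mulrNN mulr1 valuation1.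
by move/esym/eqP; rewrite -mulr2n mulrn_eq0 => /eqP.
Qed.

Lemma valuation_piX n : v (pi ^+ n) = n%:Z.
Proof.
elim: n => [|n IHn]; first by rewrite expr0 valuation1.
by rewrite exprS (lf_vM HK) ?expf_neq0 ?(lf_pi0 HK) // IHn (lf_vpi HK)
  -addn1 PoszD addrC.
Qed.

Lemma vgeD x y m : vge v x m -> vge v y m -> vge v (x + y) m.
Proof.
rewrite /vge; have [->|x_neq0] := eqVneq x 0; first by rewrite add0r.
have [->|y_neq0] := eqVneq y 0; first by rewrite addr0 (negbTE x_neq0).
have [->|xy_neq0] := eqVneq (x + y) 0; first by [].
move=> /= vx vy; apply: le_trans (lf_vD HK x_neq0 y_neq0 xy_neq0).
by rewrite le_min vx vy.
Qed.

Lemma MKM x y : MK v x -> MK v y -> MK v (x * y).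
Proof.
rewrite /MK /vge; have [->|x_neq0] := eqVneq x 0; first by rewrite mul0r eqxx.
have [->|y_neq0] := eqVneq y 0; first by rewrite mulr0 eqxx.
rewrite mulf_eq0 (negbTE x_neq0) (negbTE y_neq0) /= (lf_vM HK) // => vx vy.
by rewrite -[1]addr0 lerD // (le_trans _ vy).
Qed.

Lemma UKM u w : UK v u -> UK v w -> UK v (u * w).
Proof.
rewrite /UK => Uu Uw.
have -> : u * w - 1 = (u - 1) * (w - 1) + ((u - 1) + (w - 1)) by ring.
by apply: vgeD; [apply: MKM | apply: vgeD].
Qed.

Lemma UK1 : UK v 1.
Proof. by rewrite /UK /MK subrr /vge eqxx. Qed.

Lemma UK0 : ~~ UK v 0.
Proof. by rewrite /UK /MK /vge sub0r oppr_eq0 oner_eq0 valuationN1. Qed.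

Lemma UK_1D x : MK v x -> UK v (1 + x).
Proof. by rewrite /UK addrAC subrr add0r. Qed.

Lemma poly_eq0_on_UK (q : {poly K}) : {in UK v, forall u, q.[u] = 0} -> q = 0.
Proof.
move=> q_U; apply: (@poly_eq0_of_inj_roots _ _ (fun k => 1 + pi ^+ k.+1)).
- move=> i j /addrI /(congr1 v) /eqP.
  by rewrite !valuation_piX eqz_nat eqSS => /eqP.
- move=> k; apply/rootP/q_U/UK_1D.
  by rewrite /MK /vge valuation_piX lez_nat orbT.
Qed.

End OneUnits.

Theorem lemma2p3 (p : nat) (K : fieldType) (v : K -> int) (pi : K)
  (HK : is_local_field v p pi)
  (f : K -> K) (Hend : U_endo v f) (Han : locally_analytic v f)
  (a : nat -> 'F_p) (Ha0 : a 0%N = 1%R)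
  (Hser : forall x, MK v x ->
     seriesK v (fun n => ((a n : nat)%:R : K) * x ^+ n) (f (1 + x)))
  (Hfin : exists M : nat, forall n, (M <= n)%N -> a n = 0%R) :
  exists N : nat, forall x, MK v x -> f (1 + x) = (1 + x) ^+ N.
Proof.
have [M a_vanish] := Hfin; have [f_U f_mul] := Hend.
set g : {poly K} := \sum_(n < M) ((a n : nat)%:R : K) *: ('X - 1) ^+ n.
have f_g u : UK v u -> f u = g.[u].
  move=> Uu; have := Hser (u - 1) Uu; rewrite [1 + _]addrC subrK.
  move/(@seriesK_finite_support _ _ _ _ M) => -> => [|n /a_vanish ->];
    last by rewrite mul0r.
  rewrite horner_sum; apply: eq_bigr => n _.
  by rewrite hornerZ horner_exp hornerD hornerN hornerX hornerC.
have g_neq0 : g != 0.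
  apply: contraNneq (UK0 HK) => g0.
  by rewrite -(horner0 (1 : K)) -g0 -f_g ?f_U ?UK1.
have g_mul : {in UK v &, forall u w, g.[u * w] = g.[u] * g.[w]}.
  by move=> u w Uu Uw; rewrite -!f_g ?f_mul ?(UKM HK).
exists (size g).-1 => x Mx; rewrite f_g ?UK_1D //.
apply: (multiplicative_poly_monomial (poly_eq0_on_UK HK) (UK0 HK) _ g_neq0);
  [exact: g_mul | exact: UK_1D].
Qed.
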